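(* Let $K,L\ (\le K),F,Z,S,g$ be positive integers and let $\mathbf{A}$ be a $g$-regular $(K,L,F,Z,S)$ EPDA. Then the multi-antenna coded caching scheme obtained from $\mathbf{A}$ (with delivery time $T=\frac{S}{F}$) satisfies $$T=\frac{K}{g}\left(1-\frac{Z}{F}\right),$$ and moreover $$g\le L+\frac{KZ}{F}.$$ In particular, if $\frac{Z}{F}=\frac{t}{K}$ for an integer $t$, then $g\le t+L$.
   Context: Notation: $[n]=\{1,\dots,n\}$. An $F\times K$ array $\mathbf{A}=[a_{j,k}]$ with entries either a symbol $\star$ or integers in $[S]$ is a $(K,L,F,Z,S)$ EPDA if: (C1) $\star$ appears exactly $Z$ times in each column; (C2) every integer in $[S]$ occurs at least once; (C3) no integer appears more than once in any column; (C4) for each $s\in[S]$, letting $\mathbf{A}^{(s)}$ be the subarray obtained by deleting all rows and columns of $\mathbf{A}$ not containing $s$, no row of $\mathbf{A}^{(s)}$ contains more than $L$ integer entries. The EPDA is $g$-regular if, in addition, each integer in $[S]$ appears exactly $g$ times in $\mathbf{A}$. The multi-antenna coded caching scheme obtained from an EPDA splits each file into $F$ subfiles, and makes one transmission of size $1/F$ file per integer $s\in[S]$, so its delivery time is $T=S/F$. *)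

From mathcomp Require Import all_boot all_order all_algebra.
Set Implicit Arguments. Unset Strict Implicit. Unset Printing Implicit Defensive.
Import GRing.Theory Num.Theory.

(* An F x K array whose entries are either the symbol star (None) or an
   integer (Some s).  Rows are indexed by 'I_F, columns by 'I_K. *)
Definition array (F K : nat) := 'I_F -> 'I_K -> option nat.

Definition entries_in_range F K S (A : array F K) : Prop :=
  forall j k s, A j k = Some s -> 1 <= s <= S.

Definition C1 F K Z (A : array F K) : Prop :=
  forall k : 'I_K, #|[set j : 'I_F | A j k == None]| = Z.

Definition C2 F K S (A : array F K) : Prop :=
  forall s, 1 <= s <= S -> exists j k, A j k = Some s.

Definition C3 F K (A : array F K) : Prop :=
  forall (k : 'I_K) (j1 j2 : 'I_F) s,
    A j1 k = Some s -> A j2 k = Some s -> j1 = j2.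

Definition rows_of F K (A : array F K) s : {set 'I_F} :=
  [set j | [exists k, A j k == Some s]].
Definition cols_of F K (A : array F K) s : {set 'I_K} :=
  [set k | [exists j, A j k == Some s]].

Definition C4 F K L S (A : array F K) : Prop :=
  forall s, 1 <= s <= S ->
    forall j, j \in rows_of A s ->
      #|[set k in cols_of A s | A j k != None]| <= L.

Definition EPDA (K L F Z S : nat) (A : array F K) : Prop :=
  [/\ entries_in_range S A, C1 Z A, C2 S A, C3 A & C4 L S A].

Definition regular (g F K S : nat) (A : array F K) : Prop :=
  forall s, 1 <= s <= S ->
    #|[set p : 'I_F * 'I_K | A p.1 p.2 == Some s]| = g.

Definition delivery_time (S F : nat) : rat := (S%:R / F%:R)%R.

Arguments EPDA : clear implicits.
Arguments regular : clear implicits.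

From mathcomp Require Import all_boot all_order all_algebra zify ring.
Import GRing.Theory Num.Theory.

(* Count the pairs (filled cell (j, k0) with value s, star cell (j, k) with k
   in a column containing s).  By (C3) and regularity s occupies g columns, so
   by (C4) each filled cell contributes at least g - L, and there are
   S g = K (F - Z) filled cells.  Conversely row j, with z_j stars, contributes
   at most z_j (K - z_j); as the z_j sum to K Z, Cauchy-Schwarz bounds the total
   by K^2 Z (F - Z) / F.  Hence (g - L) F <= K Z, and T = S / F follows from
   S g = K (F - Z). *)

Set Implicit Arguments.
Unset Strict Implicit.

Lemma sum_sqr_le (I : finType) (f : I -> nat) :
  (\sum_i f i) ^ 2 <= #|I| * \sum_i f i ^ 2.
Proof.
rewrite -(leq_pmul2l (isT : 0 < 2)) expnS expn1 big_distrlr /= big_distrr /=.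
have -> : 2 * (#|I| * \sum_i f i ^ 2) = \sum_i \sum_j (f i ^ 2 + f j ^ 2).
  symmetry; under eq_bigr do rewrite big_split /= sum_nat_const.
  by rewrite big_split /= -big_distrr /= sum_nat_const; ring.
apply: leq_sum => i _; rewrite big_distrr /=.
by apply: leq_sum => j _; case: (nat_Cauchy (f i) (f j)).
Qed.

Lemma sum_mul_subn_le (I : finType) (c : nat) (z : I -> nat) :
  (forall i, z i <= c) ->
  #|I| * \sum_i z i * (c - z i) <= (\sum_i z i) * (c * #|I| - \sum_i z i).
Proof.
move=> zc; have cs := sum_sqr_le z.
have sum_split : \sum_i z i * (c - z i) + \sum_i z i ^ 2 = c * \sum_i z i.
  rewrite -big_split big_distrr /=; apply: eq_bigr => i _.
  by rewrite -mulnn -mulnDr subnK // mulnC.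
set m := \sum_i z i in cs sum_split *; set q := \sum_i z i ^ 2 in cs sum_split.
nia.
Qed.

Lemma card_rel_sum (I J : finType) (R : I -> J -> bool) :
  #|[set p : I * J | R p.1 p.2]| = \sum_i #|[set j | R i j]|.
Proof.
under eq_bigr do rewrite -sum1dep_card.
by rewrite pair_big_dep sum1dep_card.
Qed.

Lemma exchange_sum_card (I J : finType) (R : I -> J -> bool) :
  \sum_i #|[set j | R i j]| = \sum_j #|[set i | R i j]|.
Proof.
under eq_bigr do rewrite -sum1dep_card.
rewrite (exchange_big_dep xpredT) //=.
by under eq_bigr do rewrite sum1dep_card.
Qed.

Section Counting.

Context {F K : nat} (A : array F K).

Definition row_stars (j : 'I_F) : {set 'I_K} := [set k | A j k == None].

Definition filled_cells : {set 'I_F * 'I_K} := [set p | A p.1 p.2 != None].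

Lemma card_filled_cells_rows : #|filled_cells| = \sum_j #|~: row_stars j|.
Proof.
rewrite (card_rel_sum (fun j k => A j k != None)); apply: eq_bigr => j _.
by apply: eq_card => k; rewrite !inE.
Qed.

Lemma sum_card_row_stars Z : C1 Z A -> \sum_j #|row_stars j| = K * Z.
Proof.
move=> h1; rewrite exchange_sum_card (eq_bigr (fun=> Z)) => [|k _].
  by rewrite sum_nat_const card_ord.
exact: h1.
Qed.

Lemma card_filled_cells_C1 Z : C1 Z A -> #|filled_cells| = K * (F - Z).
Proof.
move=> h1; rewrite (card_rel_sum (fun j k => A j k != None)) exchange_sum_card.
rewrite (eq_bigr (fun=> F - Z)) => [|k _]; first by rewrite sum_nat_const card_ord.
rewrite cardsCs card_ord -(h1 k); congr (_ - _).
by apply: eq_card => j; rewrite !inE negbK.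
Qed.

Lemma card_filled_cells_regular S g :
  entries_in_range S A -> regular g F K S A -> #|filled_cells| = S * g.
Proof.
move=> hr hg.
have -> : S * g = \sum_(1 <= s < S.+1) \sum_(p | A p.1 p.2 == Some s) 1.
  transitivity (\sum_(1 <= s < S.+1) g); first by rewrite sum_nat_const_nat subn1.
  by apply: eq_big_nat => s hs; rewrite sum1dep_card hg.
rewrite (exchange_big_dep (fun p => A p.1 p.2 != None)) => [|s p _ /eqP-> //].
rewrite -sum1dep_card; apply: eq_bigr => p; case hp: (A p.1 p.2) => [v|] // _.
rewrite sum1_count (eq_count (a2 := pred1 v)) => [|s]; last by rewrite /= eq_sym.
by rewrite count_uniq_mem ?iota_uniq // mem_iota subnKC ?(hr _ _ _ hp).
Qed.

Lemma card_cols_of S g s :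
  C3 A -> regular g F K S A -> 1 <= s <= S -> #|cols_of A s| = g.
Proof.
move=> h3 hg hs.
have -> : cols_of A s = [set p.2 | p in [set p | A p.1 p.2 == Some s]].
  apply/setP => k; rewrite inE; apply/existsP/imsetP.
    by move=> [j hj]; exists (j, k); rewrite ?inE.
  by move=> [[j k'] hj ->]; exists j; rewrite inE in hj.
rewrite card_in_imset ?hg // => -[j1 k1] [j2 k2]; rewrite !inE /=.
by move=> /eqP e1 /eqP e2 ek; subst k2; rewrite (h3 _ _ _ _ e1 e2).
Qed.

Lemma row_stars_cols_of_lower L S g j k0 s :
  entries_in_range S A -> C3 A -> C4 L S A -> regular g F K S A ->
  A j k0 = Some s -> g - L <= #|row_stars j :&: cols_of A s|.
Proof.
move=> hr h3 h4 hg E; have hs := hr _ _ _ E.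
have hj : j \in rows_of A s by rewrite inE; apply/existsP; exists k0; rewrite E.
have := h4 _ hs _ hj; have := cardsID (row_stars j) (cols_of A s).
rewrite (card_cols_of h3 hg hs) setIC.
have -> : [set k in cols_of A s | A j k != None] = cols_of A s :\: row_stars j.
  by apply/setP => k; rewrite !inE andbC.
lia.
Qed.

Lemma filled_cells_row_stars_bound L S g :
  entries_in_range S A -> C3 A -> C4 L S A -> regular g F K S A ->
  (g - L) * #|filled_cells| <= \sum_j #|row_stars j| * #|~: row_stars j|.
Proof.
move=> hr h3 h4 hg; rewrite card_filled_cells_rows big_distrr /=.
apply: leq_sum => j _; rewrite mulnC [X in _ <= X]mulnC -!sum_nat_const.
apply: leq_sum => k0; rewrite !inE; case E: (A j k0) => [s|] // _.
apply: leq_trans (row_stars_cols_of_lower hr h3 h4 hg E) _.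
exact/subset_leq_card/subsetIl.
Qed.

End Counting.

Lemma regular_degree_bound K L F Z S g (A : array F K) :
  entries_in_range S A -> C1 Z A -> C3 A -> C4 L S A -> regular g F K S A ->
  0 < S -> 0 < g -> (g - L) * F <= K * Z.
Proof.
move=> hr h1 h3 h4 hg S_gt0 g_gt0.
have filledE := card_filled_cells_C1 h1.
have filled_gt0 : 0 < K * (F - Z).
  by rewrite -filledE (card_filled_cells_regular hr hg) muln_gt0 S_gt0.
have lower := filled_cells_row_stars_bound hr h3 h4 hg.
have card_compl j : #|~: row_stars A j| = K - #|row_stars A j|.
  by have := cardsC (row_stars A j); rewrite card_ord; lia.
rewrite filledE (eq_bigr (fun j => #|row_stars A j| * (K - #|row_stars A j|))) in lower;
  last by move=> j _; rewrite card_compl.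
have := @sum_mul_subn_le _ K (fun j => #|row_stars A j|).
rewrite card_ord (sum_card_row_stars h1) -mulnBr => upper.
rewrite -(leq_pmul2r filled_gt0) (mulnC _ F) -mulnA.
apply: leq_trans (upper _); first by rewrite leq_mul2l lower orbT.
by move=> j; rewrite -[leqRHS](card_ord K) max_card.
Qed.

Unset Implicit Arguments.
Local Open Scope ring_scope.

Theorem lemma3 (K L F Z S g : nat) (A : array F K) :
  (0 < K)%N -> (0 < L)%N -> (L <= K)%N -> (0 < F)%N -> (0 < Z)%N ->
  (0 < S)%N -> (0 < g)%N ->
  EPDA K L F Z S A -> regular g F K S A ->
  [/\ delivery_time S F = (K%:R / g%:R) * (1 - Z%:R / F%:R) :> rat,
      (g%:R <= L%:R + K%:R * Z%:R / F%:R :> rat)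
    & forall t : int, (Z%:R / F%:R = t%:~R / K%:R :> rat) ->
        (g%:R <= t%:~R + L%:R :> rat)].
Proof.
move=> K_gt0 _ _ F_gt0 _ S_gt0 g_gt0 [hr h1 _ h3 h4] hg.
have Sg : (S * g = K * (F - Z))%N.
  by rewrite -(card_filled_cells_regular hr hg) (card_filled_cells_C1 h1).
have ZF : (Z <= F)%N.
  by rewrite -(h1 (Ordinal K_gt0)) -[leqRHS](card_ord F) max_card.
have K0 : K%:R != 0 :> rat by rewrite pnatr_eq0 -lt0n.
have F0 : F%:R != 0 :> rat by rewrite pnatr_eq0 -lt0n.
have g0 : g%:R != 0 :> rat by rewrite pnatr_eq0 -lt0n.
have g_le : g%:R <= L%:R + K%:R * Z%:R / F%:R :> rat.
  rewrite -(ler_pM2r (x := F%:R)) ?ltr0n // mulrDl divfK // -!natrM -natrD ler_nat.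
  by rewrite -leq_subLR -mulnBl (regular_degree_bound hr h1 h3 h4 hg).
split => // [|t ht].
  rewrite /delivery_time -[S%:R](mulfK g0) -natrM Sg natrM natrB //.
  by field; rewrite F0 g0.
by rewrite -[t%:~R](divfK K0) -ht mulrC mulrA addrC.
Qed.
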